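(* Let $\mathbf M=(M_p)_{p\in\mathbb N_0}$ and $\mathbf N=(N_p)_{p\in\mathbb N_0}$ be sequences of positive reals with $M_0=N_0=1$ satisfying $M_p^2\le M_{p-1}M_{p+1}$ and $N_p^2\le N_{p-1}N_{p+1}$ for all $p\in\mathbb N$. Then the following are equivalent: (i) there exists $A\ge1$ such that $M_{p+1}\le A^{p+1}N_p$ for all $p\in\mathbb N_0$; (ii) there exist $A\ge1$ and $B>0$ such that $\omega_{\mathbf N}(t)+\log t\le\omega_{\mathbf M}(At)+B$ for all $t>0$.
   Context: For a sequence $\mathbf M=(M_p)_{p\in\mathbb N_0}$ with $M_0=1$, the associated function is $\omega_{\mathbf M}(t)=\sup_{p\in\mathbb N_0}\log\frac{|t|^p}{M_p}$, $t\in\mathbb R$ (with $0^0=1$). *)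

From Stdlib Require Import Reals.
From Coquelicot Require Import Coquelicot.
Open Scope R_scope.

(* Associated function omega_M(t) = sup_{p} log(|t|^p / M_p), with 0^0 = 1,
   valued in the extended reals (log 0 = -oo). *)
Definition omega_term (M : nat -> R) (t : R) (p : nat) : Rbar :=
  if Req_EM_T (Rabs t ^ p) 0 then m_infty
  else Finite (ln (Rabs t ^ p / M p)).

Definition omega (M : nat -> R) (t : R) : Rbar :=
  Sup_seq (omega_term M t).

Definition lc_seq (M : nat -> R) : Prop :=
  (forall p, 0 < M p) /\ M 0%nat = 1 /\
  (forall p : nat, (1 <= p)%nat -> M p ^ 2 <= M (p - 1)%nat * M (p + 1)%nat).

(* The quotients mu_p = M_(p+1) / M_p of a log-convex weight sequence increase, so at
   t = mu_p the supremum defining omega_M(t) is attained at the index p + 1: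
   omega_M(mu_p) = log (mu_p^(p+1) / M_(p+1)).
   (i) => (ii): each term log (t^p / N_p) + log t = log (t^(p+1) / N_p) is bounded by the
   term of index p + 1 of omega_M(A t).
   (ii) => (i): testing (ii) at t = mu_p / A against the term of index p of omega_N gives
   log (mu_p^(p+1) / (A^(p+1) N_p)) <= log (mu_p^(p+1) / M_(p+1)) + B, i.e.
   M_(p+1) <= e^B A^(p+1) N_p <= (e^B A)^(p+1) N_p. *)
From Stdlib Require Import Reals Lra Lia.
From Coquelicot Require Import Coquelicot.
Open Scope R_scope.

Lemma Sup_seq_le_ub (u : nat -> Rbar) (y : Rbar) :
  (forall n, Rbar_le (u n) y) -> Rbar_le (Sup_seq u) y.
Proof.
  intros Hub. apply (is_sup_seq_lub _ _ (Sup_seq_correct u)).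
  intros x [n ->]. apply Hub.
Qed.

Lemma Rdiv_le_Rdiv_iff (a b c d : R) :
  0 < b -> 0 < d -> (a / b <= c / d <-> a * d <= c * b).
Proof.
  intros Hb Hd.
  assert (Hbd : 0 < b * d) by nra.
  replace (a * d) with (a / b * (b * d)) by (field; lra).
  replace (c * b) with (c / d * (b * d)) by (field; lra).
  split; intro H.
  - apply Rmult_le_compat_r; lra.
  - exact (Rmult_le_reg_r _ _ _ Hbd H).
Qed.

Lemma le_exp_mul_of_ln_le (x y c : R) :
  0 < x -> 0 < y -> ln x <= ln y + c -> x <= exp c * y.
Proof.
  intros Hx Hy Hln. apply Rnot_lt_le; intro Hlt.
  apply ln_increasing in Hlt; [|apply Rmult_lt_0_compat; [apply exp_pos | lra]].
  rewrite ln_mult, ln_exp in Hlt by (try apply exp_pos; lra). lra.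
Qed.

Lemma ln_pow_succ_div (t a : R) (p : nat) :
  0 < t -> 0 < a -> ln (t ^ S p / a) = ln (t ^ p / a) + ln t.
Proof.
  intros Ht Ha. pose proof (pow_lt t p Ht).
  rewrite <- ln_mult by (try apply Rdiv_lt_0_compat; lra).
  f_equal. simpl. field. lra.
Qed.

Lemma peak_ge (g : nat -> R) (n : nat) :
  (forall k, (k < n)%nat -> g k <= g (S k)) ->
  (forall k, (n <= k)%nat -> g (S k) <= g k) ->
  forall q, g q <= g n.
Proof.
  intros Hup Hdown q. destruct (Nat.le_gt_cases q n) as [Hq | Hq].
  - replace q with (n - (n - q))%nat by lia.
    induction (n - q)%nat as [|d IH]; [rewrite Nat.sub_0_r; lra|].
    destruct (Nat.le_gt_cases (S d) n).
    + eapply Rle_trans; [|exact IH].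
      replace (n - d)%nat with (S (n - S d)) by lia. apply Hup. lia.
    + replace (n - S d)%nat with (n - d)%nat by lia. exact IH.
  - replace q with (n + (q - n))%nat by lia.
    induction (q - n)%nat as [|d IH]; [rewrite Nat.add_0_r; lra|].
    eapply Rle_trans; [|exact IH].
    rewrite Nat.add_succ_r. apply Hdown. lia.
Qed.

Lemma omega_Sup_seq_ln (M : nat -> R) (t : R) :
  0 < t -> omega M t = Sup_seq (fun p => Finite (ln (t ^ p / M p))).
Proof.
  intros Ht. apply Sup_seq_ext. intro p. unfold omega_term.
  rewrite (Rabs_pos_eq t) by lra.
  destruct (Req_EM_T (t ^ p) 0) as [Hz | _]; [|reflexivity].
  pose proof (pow_lt t p Ht). lra.
Qed.

Lemma omega_ge_ln (M : nat -> R) (t : R) (p : nat) :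
  0 < t -> Rbar_le (ln (t ^ p / M p)) (omega M t).
Proof.
  intros Ht. rewrite omega_Sup_seq_ln by exact Ht.
  apply Sup_seq_minor_le with p. apply Rle_refl.
Qed.

Lemma omega_le_of_ln_le (M : nat -> R) (t : R) (c : Rbar) :
  0 < t -> (forall p, Rbar_le (ln (t ^ p / M p)) c) -> Rbar_le (omega M t) c.
Proof.
  intros Ht Hc. rewrite omega_Sup_seq_ln by exact Ht. now apply Sup_seq_le_ub.
Qed.

Lemma omega_plus_ln_le (N : nat -> R) (t : R) (y : Rbar) :
  (forall p, 0 < N p) -> 0 < t ->
  (forall p, Rbar_le (ln (t ^ S p / N p)) y) ->
  Rbar_le (Rbar_plus (omega N t) (ln t)) y.
Proof.
  intros N_pos Ht Hy. destruct y as [y | |].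
  - assert (Hom : Rbar_le (omega N t) (y - ln t)).
    { apply omega_le_of_ln_le; [exact Ht|]. intro p.
      specialize (Hy p). rewrite ln_pow_succ_div in Hy by auto.
      simpl in *. lra. }
    destruct (omega N t); simpl in *; lra.
  - destruct (Rbar_plus (omega N t) (ln t)); exact I.
  - destruct (Hy 0%nat).
Qed.

Section LogConvexWeight.

Variable M : nat -> R.
Hypothesis M_pos : forall p, 0 < M p.
Hypothesis M_logconvex : forall p, M (S p) ^ 2 <= M p * M (S (S p)).

Definition mu (p : nat) : R := M (S p) / M p.

Lemma mu_pos (p : nat) : 0 < mu p.
Proof. apply Rdiv_lt_0_compat; apply M_pos. Qed.

Lemma mu_growing : Un_growing mu.
Proof.
  intro p. unfold mu. apply Rdiv_le_Rdiv_iff; try apply M_pos.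
  pose proof (M_logconvex p). simpl in *. lra.
Qed.

Lemma mu_le (a b : nat) : (a <= b)%nat -> mu a <= mu b.
Proof. intro Hab. apply Rge_le, growing_prop; [exact mu_growing | exact Hab]. Qed.

Lemma pow_div_le_succ (t : R) (k : nat) :
  0 < t -> mu k <= t -> t ^ k / M k <= t ^ S k / M (S k).
Proof.
  intros Ht Hmu. pose proof (M_pos k). pose proof (pow_lt t k Ht).
  assert (M (S k) <= t * M k).
  { replace (M (S k)) with (mu k * M k) by (unfold mu; field; lra).
    apply Rmult_le_compat_r; lra. }
  apply Rdiv_le_Rdiv_iff; try apply M_pos. simpl. nra.
Qed.

Lemma pow_div_succ_le (t : R) (k : nat) :
  0 < t -> t <= mu k -> t ^ S k / M (S k) <= t ^ k / M k.
Proof.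
  intros Ht Hmu. pose proof (M_pos k). pose proof (pow_lt t k Ht).
  assert (t * M k <= M (S k)).
  { replace (M (S k)) with (mu k * M k) by (unfold mu; field; lra).
    apply Rmult_le_compat_r; lra. }
  apply Rdiv_le_Rdiv_iff; try apply M_pos. simpl. nra.
Qed.

Lemma pow_mu_div_le (p q : nat) : mu p ^ q / M q <= mu p ^ S p / M (S p).
Proof.
  apply (peak_ge (fun k => mu p ^ k / M k)); intros k Hk.
  - apply pow_div_le_succ; [apply mu_pos | apply mu_le; lia].
  - apply pow_div_succ_le; [apply mu_pos | apply mu_le; lia].
Qed.

Lemma omega_at_mu (p : nat) :
  Rbar_le (omega M (mu p)) (ln (mu p ^ S p / M (S p))).
Proof.
  apply omega_le_of_ln_le; [apply mu_pos|]. intro q.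
  apply ln_le; [|apply pow_mu_div_le].
  apply Rdiv_lt_0_compat; [apply pow_lt, mu_pos | apply M_pos].
Qed.

End LogConvexWeight.

Lemma lc_seq_logconvex (M : nat -> R) :
  lc_seq M -> forall p, M (S p) ^ 2 <= M p * M (S (S p)).
Proof.
  intros [_ [_ Hlc]] p. specialize (Hlc (S p) ltac:(lia)).
  now rewrite Nat.sub_succ, Nat.sub_0_r, Nat.add_1_r in Hlc.
Qed.

Lemma omega_shift_of_weight_le (M N : nat -> R) (A : R) :
  (forall p, 0 < M p) -> (forall p, 0 < N p) -> 0 < A ->
  (forall p, M (S p) <= A ^ S p * N p) ->
  forall t, 0 < t -> Rbar_le (Rbar_plus (omega N t) (ln t)) (omega M (A * t)).
Proof.
  intros M_pos N_pos HA Hweight t Ht.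
  apply omega_plus_ln_le; [exact N_pos | exact Ht |]. intro p.
  apply Rbar_le_trans with (ln ((A * t) ^ S p / M (S p))); [|apply omega_ge_ln; nra].
  apply ln_le; [apply Rdiv_lt_0_compat; [apply pow_lt, Ht | apply N_pos]|].
  apply Rdiv_le_Rdiv_iff; [apply N_pos | apply M_pos |].
  rewrite Rpow_mult_distr. pose proof (pow_lt t (S p) Ht). specialize (Hweight p). nra.
Qed.

Lemma weight_le_of_omega_shift (M N : nat -> R) (A B : R) :
  (forall p, 0 < M p) -> (forall p, M (S p) ^ 2 <= M p * M (S (S p))) ->
  (forall p, 0 < N p) -> 0 < A ->
  (forall t, 0 < t ->
     Rbar_le (Rbar_plus (omega N t) (ln t)) (Rbar_plus (omega M (A * t)) B)) ->
  forall p, M (S p) <= exp B * A ^ S p * N p.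
Proof.
  intros M_pos M_lc N_pos HA Hshift p.
  set (t := mu M p). set (s := t / A).
  assert (Ht : 0 < t) by exact (mu_pos M M_pos p).
  assert (Hs : 0 < s) by (apply Rdiv_lt_0_compat; lra).
  assert (Hts : t = A * s) by (unfold s; field; lra).
  assert (Hln : ln (s ^ S p / N p) <= ln (t ^ S p / M (S p)) + B).
  { rewrite ln_pow_succ_div by auto.
    change (Rbar_le (Rbar_plus (ln (s ^ p / N p)) (ln s))
                    (Rbar_plus (ln (t ^ S p / M (S p))) B)).
    apply (Rbar_le_trans _ (Rbar_plus (omega N s) (ln s))).
    { apply Rbar_plus_le_compat; [apply omega_ge_ln, Hs | apply Rle_refl]. }
    apply (Rbar_le_trans _ _ _ (Hshift s Hs)). rewrite <- Hts.
    apply Rbar_plus_le_compat; [apply omega_at_mu; auto | apply Rle_refl]. }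
  pose proof (pow_lt s (S p) Hs).
  apply le_exp_mul_of_ln_le in Hln;
    [|apply Rdiv_lt_0_compat; auto | apply Rdiv_lt_0_compat; [apply pow_lt, Ht | auto]].
  rewrite Rmult_div_assoc, Hts, Rpow_mult_distr in Hln.
  rewrite Rdiv_le_Rdiv_iff in Hln by auto.
  apply Rmult_le_reg_l with (s ^ S p); [assumption | nra].
Qed.

Theorem lemma2p2 (M N : nat -> R) :
  lc_seq M -> lc_seq N ->
  ((exists A : R, 1 <= A /\
      forall p : nat, M (S p) <= A ^ (S p) * N p)
   <->
   (exists A B : R, 1 <= A /\ 0 < B /\
      forall t : R, 0 < t ->
        Rbar_le (Rbar_plus (omega N t) (Finite (ln t)))
                (Rbar_plus (omega M (A * t)) (Finite B)))).
Proof.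
  intros HM HN.
  pose proof (proj1 HM) as M_pos. pose proof (proj1 HN) as N_pos.
  split.
  - intros [A [HA Hweight]]. exists A, 1. split; [exact HA | split; [lra |]].
    intros t Ht.
    apply (Rbar_le_trans _ _ _ (omega_shift_of_weight_le M N A M_pos N_pos
                                  ltac:(lra) Hweight t Ht)).
    rewrite <- (Rbar_plus_0_r (omega M (A * t))) at 1.
    apply Rbar_plus_le_compat; [apply Rbar_le_refl | simpl; lra].
  - intros [A [B [HA [HB Hshift]]]].
    assert (HeB : 1 <= exp B) by (pose proof (exp_ineq1_le B); lra).
    exists (exp B * A). split; [nra |]. intro p.
    eapply Rle_trans.
    { apply (weight_le_of_omega_shift M N A B M_pos (lc_seq_logconvex M HM) N_pos);
        [lra | exact Hshift]. }
    rewrite Rpow_mult_distr.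
    pose proof (Rle_pow (exp B) 1 (S p) HeB ltac:(lia)) as HeBp. rewrite pow_1 in HeBp.
    pose proof (pow_lt A (S p) ltac:(lra)). pose proof (N_pos p).
    apply Rmult_le_compat_r; [lra |]. apply Rmult_le_compat_r; lra.
Qed.
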